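(* Let $q$ be a prime power, let $k\ge 2$ and $1\le r\le k-1$ be integers, and let $\varepsilon_r,\dots,\varepsilon_{k-2}$ be integers with $0\le\varepsilon_i\le q-1$. Let $\mathcal{F}$ be a multiset of points in $\mathrm{PG}(k-1,q)$ with parameters \[ \Bigl(\sum_{i=r}^{k-2}\varepsilon_i v_{i+1},\ \sum_{i=r}^{k-2}\varepsilon_i v_{i+1-r}\Bigr)^{(k-1-r)} \] (as a minihyper), and let $w_0$ be the maximal multiplicity of a point in $\mathcal{F}$. Then for every integer $\sigma\ge w_0$ the multiset $\mathcal{K}=\sigma-\mathcal{F}$ (i.e. $\mathcal{K}(P)=\sigma-\mathcal{F}(P)$ for every point $P$) is an arc with parameters \[ \Bigl(n=\sigma v_k-\sum_{i=r}^{k-2}\varepsilon_i v_{i+1},\ \ w_{k-r-1}=\sigma v_{k-r}-\sum_{i=r}^{k-2}\varepsilon_i v_{i+1-r}\Bigr)^{(k-1-r)}, \] and the linear code $C$ associated with $\mathcal{K}$ is a Griesmer code with respect to the $r$th generalized Hamming weight, i.e. $n=g_q^{(r)}(k,d_r(C))$.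
   Context: $v_j=(q^j-1)/(q-1)$. Dimensions in $\mathrm{PG}(k-1,q)$ are projective (points have dimension 0, hyperplanes dimension $k-2$, the whole space dimension $k-1$). A multiset of points is a map $\mathcal{K}$ from the point set of $\mathrm{PG}(k-1,q)$ to $\mathbb{Z}_{\ge0}$; for a set $S$ of points, $\mathcal{K}(S)=\sum_{P\in S}\mathcal{K}(P)$. A multiset has minihyper parameters $(n,u)^{(j)}$ if its total multiplicity is $n$, every $j$-dimensional subspace has multiplicity at least $u$, and some $j$-dimensional subspace has multiplicity exactly $u$; it has arc parameters $(n,w)^{(j)}$ if its total multiplicity is $n$, every $j$-dimensional subspace has multiplicity at most $w$, and some has multiplicity exactly $w$. The code associated with a multiset $\mathcal{K}$ of total multiplicity $n$ is the row space of a $k\times n$ matrix over $\mathbb{F}_q$ whose columns are coordinate vectors of the points of $\mathcal{K}$, each point $P$ appearing $\mathcal{K}(P)$ times. For a linear code $C\le\mathbb{F}_q^n$, the support of a subcode $C'$ is the set of coordinates where some codeword of $C'$ is nonzero, and the $r$th generalized Hamming weight $d_r(C)$ is the minimum support size of an $r$-dimensional subcode. For integers $k$, $1\le r\le k$ and $d$, $g_q^{(r)}(k,d)=d+\sum_{i=1}^{k-r}\lceil d/(q^i v_r)\rceil$. *)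

From HB Require Import structures.
From mathcomp Require Import all_boot all_order all_algebra.
Set Implicit Arguments. Unset Strict Implicit. Unset Printing Implicit Defensive.
Import GRing.Theory.
Local Open Scope ring_scope.

Section Proj.
Variable F : finFieldType.
Variable k : nat.

(* A point of PG(k-1,q): a 1-dimensional subspace of F^k, represented by its
   canonical row-space matrix <<A>>%MS. *)
Definition is_point (A : 'M[F]_k) : bool := (\rank A == 1)%N && (<<A>>%MS == A).
Definition point := {A : 'M[F]_k | is_point A}.

Definition mult (K : point -> nat) (S : 'M[F]_k) : nat :=
  (\sum_(P : point | (val P <= S)%MS) K P)%N.

Definition total (K : point -> nat) : nat := (\sum_(P : point) K P)%N.

(* j-dimensional projective subspaces = (j+1)-dimensional vector subspaces. *)
Definition proj_subspace (j : nat) (S : 'M[F]_k) : bool := \rank S == j.+1.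

Definition minihyper_params (K : point -> nat) (n u j : nat) : Prop :=
  [/\ total K = n,
      (forall S, proj_subspace j S -> u <= mult K S)%N &
      exists2 S, proj_subspace j S & mult K S = u].

Definition arc_params (K : point -> nat) (n w j : nat) : Prop :=
  [/\ total K = n,
      (forall S, proj_subspace j S -> mult K S <= w)%N &
      exists2 S, proj_subspace j S & mult K S = w].

Definition assoc_gen_matrix (K : point -> nat) (N : nat) (G : 'M[F]_(k, N)) : Prop :=
  (forall j : 'I_N, col j G != 0) /\
  (forall P : point, #|[set j : 'I_N | (((col j G)^T) == val P)%MS]| = K P).
End Proj.

Section Code.
Variable F : finFieldType.
Variables (k N : nat).

Definition support (D : 'M[F]_N) : {set 'I_N} :=
  [set j : 'I_N | [exists v : 'rV[F]_N, (v <= D)%MS && (v 0 j != 0)]].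

(* r-th generalized Hamming weight of the code = row space of G: minimum support
   size of an r-dimensional subcode (default N if there is none). *)
Definition ghw (G : 'M[F]_(k, N)) (r : nat) : nat :=
  \big[minn/N]_(D : 'M[F]_N | (D <= G)%MS && (\rank D == r)) #|support D|.
End Code.

Definition vq (q j : nat) : nat := ((q ^ j - 1) %/ (q - 1))%N.

Definition ceil_div (a b : nat) : nat := ((a + b - 1) %/ b)%N.

Definition griesmer_r (q r k d : nat) : nat :=
  (d + \sum_(1 <= i < (k - r).+1) ceil_div d (q ^ i * vq q r))%N.

From Pilot Require Import Defs.
From HB Require Import structures.
From mathcomp Require Import all_boot all_order all_algebra.
From mathcomp Require Import zify.
Set Implicit Arguments. Unset Strict Implicit. Unset Printing Implicit Defensive.
Import Order.TTheory GRing.Theory.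

(* Put K = sigma - F.  Every subspace S has K(S) = sigma v_(dim S) - F(S), so
   the minihyper bounds of F are exactly the arc bounds (n, w) of K.  Reading the eps_i
   as q-adic digits of a number R < q^m (m = k - r), one finds n - w = v_r delta with
   delta = sigma q^m - R, and ceil(delta / q^j) = sigma q^(m-j) - floor(R / q^j); these
   sum to w over j = 1..m, whence g_q^(r)(k, n - w) = n.  On the code side,
   d_r(C) = n - max {K(T) : dim T = k - r} = n - w as soon as C has dimension k.  It does:
   if all points of K lay in a hyperplane H, then for r >= 2 the multiset K on H would be
   an arc contradicting the Griesmer bound g_q^(r-1)(k-1, n - w) <= n, proved by the
   usual induction on residual arcs; for r = 1, H is a (k-2)-space of weight n > w. *)

Section GaussianSums.
Variable q : nat.
Hypothesis q_gt1 : 1 < q.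

Lemma vqE j : vq q j = \sum_(i < j) q ^ i.
Proof. by rewrite /vq subn1 predn_exp subn1 mulKn //; case: q q_gt1. Qed.

Lemma vq0 : vq q 0 = 0.
Proof. by rewrite vqE big_ord0. Qed.

Lemma vqS j : vq q j.+1 = vq q j + q ^ j.
Proof. by rewrite !vqE big_ord_recr. Qed.

Lemma vqD a b : vq q (a + b) = vq q a + q ^ a * vq q b.
Proof.
elim: b => [|b IH]; first by rewrite addn0 vq0 muln0 addn0.
by rewrite addnS !vqS IH mulnDr -expnD addnA.
Qed.

Lemma vq1 : vq q 1 = 1.
Proof. by rewrite vqS vq0. Qed.

Lemma vq_gt0 j : 0 < j -> 0 < vq q j.
Proof. by case: j => // j _; rewrite vqS addn_gt0 expn_gt0 (ltnW q_gt1) orbT. Qed.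

Lemma vqSl j : vq q j.+1 = (q * vq q j).+1.
Proof. by rewrite -add1n vqD vq1 expn1. Qed.

Lemma vq_mul_pred j : (q - 1) * vq q j = q ^ j - 1.
Proof. by rewrite vqE !subn1 predn_exp. Qed.

Lemma sum_expn_rev n : \sum_(1 <= j < n.+1) q ^ (n - j) = vq q n.
Proof.
elim: n => [|n IH]; first by rewrite big_geq // vq0.
by rewrite big_nat_recl // subn1 vqS -IH addnC.
Qed.

End GaussianSums.

Lemma leq_ceil_div a b x : 0 < b -> (x <= ceil_div a b) = (x * b < a + b).
Proof. by move=> b_gt0; rewrite /ceil_div leq_divRL //; apply/idP/idP; lia. Qed.

Lemma ceil_div_leq a b x : 0 < b -> (ceil_div a b <= x) = (a <= x * b).
Proof. by move=> b_gt0; rewrite leqNgt leq_ceil_div // mulSn; apply/idP/idP; lia. Qed.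

Lemma ceil_div_unique a b x : 0 < b -> a <= x * b -> x * b < a + b -> ceil_div a b = x.
Proof. by move=> b_gt0 lo hi; apply/eqP; rewrite eqn_leq ceil_div_leq // leq_ceil_div // lo. Qed.

Lemma ceil_div_spec a b : 0 < b -> a <= ceil_div a b * b < a + b.
Proof. by move=> b_gt0; rewrite -ceil_div_leq // -leq_ceil_div // leqnn. Qed.

Lemma ceil_div_pmul2r v a b : 0 < v -> 0 < b -> ceil_div (a * v) (b * v) = ceil_div a b.
Proof.
move=> v_gt0 b_gt0; have /andP[lo hi] := ceil_div_spec a b_gt0.
apply: ceil_div_unique; first by rewrite muln_gt0 b_gt0.
  by rewrite mulnA leq_mul2r lo orbT.
by rewrite mulnA -mulnDl ltn_mul2r v_gt0.
Qed.

Lemma ceil_divA a b c : 0 < b -> 0 < c -> ceil_div (ceil_div a b) c = ceil_div a (b * c).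
Proof.
move=> b_gt0 c_gt0; have bc_gt0 : 0 < b * c by rewrite muln_gt0 b_gt0.
apply/eqP; rewrite eqn_leq; apply/andP; split.
  by rewrite !ceil_div_leq // -mulnA (mulnC c) -ceil_div_leq.
rewrite ceil_div_leq //; have /andP[lo _] := ceil_div_spec a b_gt0.
apply: leq_trans lo _; rewrite (mulnC b) mulnA leq_mul2r.
by rewrite -ceil_div_leq // leqnn orbT.
Qed.

Lemma ceil_div0n b : ceil_div 0 b = 0.
Proof. by case: b => // b; rewrite /ceil_div add0n subn1 divn_small. Qed.

Lemma leq_ceil_div2r b a a' : a <= a' -> ceil_div a b <= ceil_div a' b.
Proof. by move=> le_aa'; rewrite leq_div2r // leq_sub2r // leq_add2r. Qed.

Lemma griesmer_r_step q t s D : 1 < q -> 0 < t -> t < s ->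
  griesmer_r q t s D = D + griesmer_r q 1 (s - t) (ceil_div D (q * vq q t)).
Proof.
move=> q_gt1 t_gt0 t_lt_s; have q_gt0 := ltnW q_gt1.
rewrite /griesmer_r subn1 prednK ?subn_gt0 // big_nat_recl ?subn_gt0 //.
rewrite expn1; congr (_ + (_ + _)); apply: eq_bigr => i _.
by rewrite vq1 // muln1 ceil_divA ?muln_gt0 ?expn_gt0 ?q_gt0 ?vq_gt0 // expnS mulnAC.
Qed.

Lemma griesmer_r0 q t s : griesmer_r q t s 0 = 0.
Proof. by rewrite /griesmer_r big1 // => i _; rewrite ceil_div0n. Qed.

Lemma leq_griesmer_r q t s d d' : d <= d' -> griesmer_r q t s d <= griesmer_r q t s d'.
Proof. by move=> le_dd'; rewrite leq_add // leq_sum // => i _; apply: leq_ceil_div2r. Qed.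

Section Digits.
Variables (q r m sigma : nat) (e : nat -> nat).
Hypotheses (q_gt1 : 1 < q) (r_gt0 : 0 < r) (sigma_gt0 : 0 < sigma).
Hypothesis e_digit : forall i, i < m -> e i < q.

(* With R := digits_low m < q ^ m, digits_low j and digits_high j are R mod q ^ j
   and R div q ^ j; arc_delta_up j is the ceiling of arc_delta / q ^ j. *)

Definition digits_low j := \sum_(i < j) e i * q ^ i.
Definition digits_high j := \sum_(j <= i < m) e i * q ^ (i - j).
Definition arc_delta := sigma * q ^ m - digits_low m.
Definition arc_delta_up j := sigma * q ^ (m - j) - digits_high j.
Definition arc_n := sigma * vq q (m + r) - \sum_(i < m) e i * vq q (i + r).
Definition arc_w := sigma * vq q m - \sum_(i < m) e i * vq q i.

Let q_gt0 : 0 < q. Proof. exact: ltnW. Qed.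

Lemma digits_low_lt j : j <= m -> digits_low j < q ^ j.
Proof.
elim: j => [|j IH] le_jm; first by rewrite /digits_low big_ord0.
rewrite /digits_low big_ord_recr /= -/(digits_low j) expnS.
have := IH (ltnW le_jm); have := e_digit le_jm.
have : 0 < q ^ j by rewrite expn_gt0 q_gt0.
nia.
Qed.

Lemma digits_low_high j : j <= m -> q ^ j * digits_high j + digits_low j = digits_low m.
Proof.
move=> le_jm; rewrite /digits_low -!(big_mkord xpredT (fun i => e i * q ^ i)).
rewrite (@big_cat_nat _ _ _ j 0 m) //= addnC /digits_high big_distrr /=; congr (_ + _).
by apply: eq_big_nat => i /andP[le_ji _]; rewrite mulnCA -expnD subnKC.
Qed.

Lemma digits_high_lt j : j <= m -> digits_high j < q ^ (m - j).
Proof.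
move=> le_jm; have qj_gt0 : 0 < q ^ j by rewrite expn_gt0 q_gt0.
rewrite -(ltn_pmul2l qj_gt0) -expnD subnKC //.
have := digits_low_high le_jm; have := digits_low_lt (leqnn m); lia.
Qed.

Lemma arc_delta_gt0 : 0 < arc_delta.
Proof. by rewrite subn_gt0 (leq_trans (digits_low_lt (leqnn m))) // leq_pmull. Qed.

Lemma arc_delta_upE j : j <= m -> q ^ j * arc_delta_up j = arc_delta + digits_low j.
Proof.
move=> le_jm; rewrite /arc_delta_up /arc_delta mulnBr mulnCA -expnD subnKC //.
have := digits_low_high le_jm; have := digits_low_lt (leqnn m); have := digits_high_lt le_jm.
have : q ^ m <= sigma * q ^ m by rewrite leq_pmull.
nia.
Qed.

Lemma ceil_div_arc_delta j : j <= m -> ceil_div arc_delta (q ^ j) = arc_delta_up j.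
Proof.
move=> le_jm; apply: ceil_div_unique; rewrite ?expn_gt0 ?q_gt0 // mulnC arc_delta_upE //.
  exact: leq_addr.
by rewrite ltn_add2l digits_low_lt.
Qed.

Lemma sum_digit_tails n :
  \sum_(1 <= j < n.+1) \sum_(j <= i < n) e i * q ^ (i - j) = \sum_(i < n) e i * vq q i.
Proof.
elim: n => [|n IH]; first by rewrite big_geq // big_ord0.
rewrite big_nat_recr //= [X in _ + X]big_geq // addn0 big_ord_recr /= -IH.
rewrite -sum_expn_rev // big_distrr -big_split /=.
by apply: eq_big_nat => j /andP[j_gt0 le_jn]; rewrite big_nat_recr.
Qed.

Lemma digits_high_le j : digits_high j <= sigma * q ^ (m - j).
Proof.
have [le_jm|lt_mj] := leqP j m; last by rewrite /digits_high big_geq // ltnW.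
by rewrite (leq_trans (ltnW (digits_high_lt le_jm))) // leq_pmull.
Qed.

Lemma sum_arc_delta_up : \sum_(1 <= j < m.+1) arc_delta_up j = arc_w.
Proof.
rewrite /arc_delta_up sumnB => [|j _]; last exact: digits_high_le.
by rewrite sum_digit_tails -big_distrr sum_expn_rev.
Qed.

Lemma arc_nE : arc_n = arc_w + vq q r * arc_delta.
Proof.
have low_le : digits_low m <= sigma * q ^ m.
  by rewrite (leq_trans (ltnW (digits_low_lt (leqnn m)))) // leq_pmull.
have tails_le : \sum_(i < m) e i * vq q i <= sigma * vq q m.
  rewrite -sum_digit_tails -sum_expn_rev // big_distrr.
  by apply: leq_sum => j _; apply: digits_high_le.
rewrite /arc_n /arc_w /arc_delta (vqD q_gt1 m r).
have -> : \sum_(i < m) e i * vq q (i + r) = \sum_(i < m) e i * vq q i + vq q r * digits_low m.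
  rewrite /digits_low big_distrr -big_split /=; apply: eq_bigr => i _.
  by rewrite vqD // mulnDr mulnA [vq q r * _]mulnC.
rewrite mulnDr mulnBr (mulnCA sigma) (mulnC (q ^ m)).
have : vq q r * digits_low m <= vq q r * (sigma * q ^ m) by rewrite leq_mul2l low_le orbT.
lia.
Qed.

Lemma arc_w_lt_n : arc_w < arc_n.
Proof. by rewrite arc_nE -addn1 leq_add2l muln_gt0 vq_gt0 // arc_delta_gt0. Qed.

Lemma arc_n_subw : arc_n - arc_w = vq q r * arc_delta.
Proof. by rewrite arc_nE addKn. Qed.

Lemma griesmer_arc_n : griesmer_r q r (m + r) (arc_n - arc_w) = arc_n.
Proof.
rewrite /griesmer_r arc_n_subw addnK [RHS]arc_nE addnC -sum_arc_delta_up.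
congr (_ + _); apply: eq_big_nat => j /andP[_ le_jm].
by rewrite mulnC ceil_div_pmul2r ?vq_gt0 ?expn_gt0 ?q_gt0 // ceil_div_arc_delta.
Qed.

Lemma griesmer_arc_n_gt : 1 < r -> 0 < m ->
  arc_n < griesmer_r q r.-1 (m + r).-1 (arc_n - arc_w).
Proof.
move=> r_gt1 m_gt0; set r' := r.-1.
have r'_gt0 : 0 < r' by rewrite /r' -subn1 subn_gt0.
have vq_r : vq q r = vq q r' + q ^ r' by rewrite -vqS // prednK.
have scaled j : j <= m -> arc_delta_up j * (q ^ j * vq q r') = (arc_delta + digits_low j) * vq q r'.
  by move=> le_jm; rewrite mulnA (mulnC _ (q ^ j)) arc_delta_upE.
rewrite /griesmer_r; have -> : (m + r).-1 - r' = m by rewrite /r'; lia.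
rewrite arc_n_subw [X in X < _]arc_nE addnC -addnS leq_add2l -sum_arc_delta_up.
rewrite !big_nat_recl // -addSn leq_add //.
  rewrite leq_ceil_div ?muln_gt0 ?expn_gt0 ?q_gt0 ?vq_gt0 // mulSn scaled //.
  have low1 : digits_low 1 * vq q r' <= q ^ r' - 1.
    rewrite -vq_mul_pred // leq_mul2r; have := digits_low_lt m_gt0; rewrite expn1; lia.
  have : q ^ r' <= q ^ r' * arc_delta by rewrite leq_pmulr ?arc_delta_gt0.
  rewrite vq_r expn1; nia.
rewrite big_nat_cond [X in _ <= X]big_nat_cond; apply: leq_sum => i /andP[/andP[_ lt_im] _].
rewrite leq_ceil_div ?muln_gt0 ?expn_gt0 ?q_gt0 ?vq_gt0 // scaled //.
have := digits_low_lt lt_im; have : 0 < arc_delta := arc_delta_gt0; nia.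
Qed.

End Digits.

Lemma card_set_sum (T : finType) (p : pred T) : #|[set x | p x]| = \sum_x p x.
Proof. by rewrite -sum1_card big_mkcond; apply: eq_bigr => x _; rewrite inE; case: (p x). Qed.

Lemma sum_nat_cond_const (T : finType) (p : pred T) c :
  \sum_(x | p x) c = #|[set x | p x]| * c.
Proof.
rewrite card_set_sum big_distrl big_mkcond /=; apply: eq_bigr => x _.
by case: (p x); rewrite ?mul1n ?mul0n.
Qed.

Section Points.
Variables (F : finFieldType) (k : nat).
Local Notation q := #|F|.
Local Notation point := (point F k).
Let q_gt1 : 1 < q := card_finNzRing_gt1 F.
Let q_gt0 : 0 < q := ltnW q_gt1.

Lemma card_rV_submx m (S : 'M[F]_(m, k)) : #|[set v : 'rV_k | (v <= S)%MS]| = q ^ \rank S.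
Proof.
have -> : [set v : 'rV_k | (v <= S)%MS] = [set u *m row_base S | u in [set: 'rV_(\rank S)]]%R.
  apply/setP => v; rewrite inE -(eq_row_base S); apply/idP/imsetP.
    by case/submxP => u ->; exists u.
  by case=> u _ ->; rewrite submxMl.
by rewrite card_imset ?cardsT ?card_mx ?mul1n //; apply: row_free_inj (row_base_free S).
Qed.

Lemma card_rV_submx_neq0 m (S : 'M[F]_(m, k)) :
  #|[set v : 'rV_k | (v != 0%R) && (v <= S)%MS]| = q ^ \rank S - 1.
Proof.
rewrite -card_rV_submx [in RHS](cardsD1 0%R) inE sub0mx add1n subn1 /=.
by apply: eq_card => v; rewrite !inE.
Qed.

Lemma rank_point (P : point) : \rank (val P) = 1.
Proof. by case: P => A /= /andP[/eqP]. Qed.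

Lemma genmx_point (P : point) : <<val P>>%MS = val P.
Proof. by case: P => A /= /andP[_ /eqP]. Qed.

Lemma is_point_genmx (v : 'rV[F]_k) : v != 0%R -> is_point <<v>>%MS.
Proof. by move=> v_neq0; rewrite /is_point mxrank_gen rank_rV v_neq0 genmx_id !eqxx. Qed.

Definition point_of (v : 'rV[F]_k) (v_neq0 : v != 0%R) : point :=
  exist _ <<v>>%MS (is_point_genmx v_neq0).

Lemma sub_point (v : 'rV[F]_k) (v_neq0 : v != 0%R) (P : point) :
  (v <= val P)%MS = (P == point_of v_neq0).
Proof.
apply/idP/eqP => [vP|->]; last by rewrite genmxE.
apply: val_inj; rewrite /= -genmx_point; apply/eq_genmx/eqmx_sym/eqmxP.
by have := mxrank_leqif_eq vP; rewrite rank_point rank_rV v_neq0 => -[_ <-].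
Qed.

Lemma point_eq_sub (v : 'rV[F]_k) (P : point) :
  v != 0%R -> (v == val P)%MS = (v <= val P)%MS.
Proof.
move=> v_neq0; apply/idP/idP => [/andP[] //|vP]; rewrite vP /=.
by move: vP; rewrite (sub_point v_neq0) => /eqP->; rewrite genmxE.
Qed.

Lemma sum_points_through (v : 'rV[F]_k) m (S : 'M[F]_(m, k)) : v != 0%R ->
  \sum_(P : point) ((val P <= S)%MS && (v <= val P)%MS) = (v <= S)%MS.
Proof.
move=> v_neq0; rewrite (bigD1 (point_of v_neq0)) //= big1 ?addn0.
  by rewrite !genmxE submx_refl andbT.
by move=> P; rewrite sub_point => /negbTE->; rewrite andbF.
Qed.

Lemma card_points_sub_mul m (S : 'M[F]_(m, k)) :
  #|[set P : point | (val P <= S)%MS]| * (q - 1) = q ^ \rank S - 1.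
Proof.
rewrite -card_rV_submx_neq0 !card_set_sum big_distrl /=.
transitivity (\sum_(P : point) \sum_(v : 'rV_k)
    ((val P <= S)%MS && ((v != 0%R) && (v <= val P)%MS))).
  apply: eq_bigr => P _; case: (val P <= S)%MS; last by rewrite mul0n big1.
  by rewrite mul1n -card_set_sum card_rV_submx_neq0 rank_point.
rewrite exchange_big /=; apply: eq_bigr => v _.
have [->|v_neq0] := eqVneq v 0%R; first by rewrite big1 // => P _; rewrite andbF.
by rewrite -(sum_points_through S v_neq0).
Qed.

Lemma total_mult (M : point -> nat) : Defs.total M = mult M 1%:M%R.
Proof. by apply: eq_bigl => P; rewrite submx1. Qed.

Lemma card_points_sub m (S : 'M[F]_(m, k)) :
  #|[set P : point | (val P <= S)%MS]| = vq q (\rank S).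
Proof. by rewrite /vq -card_points_sub_mul mulnK // subn_gt0. Qed.

Lemma exists_submx_rank m (A : 'M[F]_(m, k)) t : t <= \rank A ->
  exists2 T : 'M[F]_k, (T <= A)%MS & \rank T = t.
Proof.
move=> le_tA; exists (pid_mx t *m row_base A)%R; first by rewrite -(eq_row_base A) submxMl.
by rewrite mxrankMfree ?row_base_free // rank_pid_mx // (leq_trans le_tA (rank_leq_col A)).
Qed.

Lemma mxrank_adds_point (V : 'M[F]_k) (P : point) :
  ~~ (val P <= V)%MS -> \rank (V + val P)%MS = (\rank V).+1.
Proof.
move=> PV; have cap0 : \rank (V :&: val P)%MS = 0.
  have [] := mxrank_leqif_sup (capmxSr V (val P)); rewrite rank_point.
  case: (\rank _) => [//|[|//]] _.
  by rewrite eqxx sub_capmx submx_refl andbT (negbTE PV).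
by have := mxrank_sum_cap V (val P); rewrite rank_point cap0 addn0 addn1.
Qed.

Lemma adds_point_exchange (V : 'M[F]_k) (P P' : point) :
  ~~ (val P <= V)%MS -> ~~ (val P' <= V)%MS ->
  (val P' <= V + val P)%MS -> (val P <= V + val P')%MS.
Proof.
move=> PV P'V P'VP; have sub : (V + val P' <= V + val P)%MS by rewrite addsmx_sub addsmxSl.
have := mxrank_leqif_sup sub; rewrite !mxrank_adds_point // => -[_].
by rewrite eqxx addsmx_sub => /esym/andP[].
Qed.

Definition mult_diff (M : point -> nat) (X V : 'M[F]_k) :=
  \sum_(P : point | (val P <= X)%MS && ~~ (val P <= V)%MS) M P.

Lemma mult_split (M : point -> nat) (X V : 'M[F]_k) :
  (V <= X)%MS -> mult M X = mult M V + mult_diff M X V.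
Proof.
move=> VX; rewrite /mult /mult_diff (bigID (fun P : point => (val P <= V)%MS)) /=.
congr (_ + _); apply: eq_bigl => P; rewrite andb_idl // => PV; exact: submx_trans PV VX.
Qed.

Lemma leq_mult_sub (M : point -> nat) (X V : 'M[F]_k) : (V <= X)%MS -> mult M V <= mult M X.
Proof. by move=> VX; rewrite (mult_split M VX) leq_addr. Qed.

Lemma card_points_diff (X V : 'M[F]_k) : (V <= X)%MS ->
  #|[set P : point | (val P <= X)%MS && ~~ (val P <= V)%MS]| = vq q (\rank X) - vq q (\rank V).
Proof.
move=> VX; rewrite -!card_points_sub.
rewrite -(cardsID [set P : point | (val P <= V)%MS] [set P : point | (val P <= X)%MS]).
have -> : [set P : point | (val P <= X)%MS] :&: [set P : point | (val P <= V)%MS] =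
          [set P : point | (val P <= V)%MS].
  by apply/setP => P; rewrite !inE andb_idl // => PV; exact: submx_trans PV VX.
by rewrite addKn; apply: eq_card => P; rewrite !inE andbC.
Qed.

Lemma card_points_exchange (U V : 'M[F]_k) (P' : point) :
  (V <= U)%MS -> (val P' <= U)%MS -> ~~ (val P' <= V)%MS ->
  #|[set P : point | [&& (val P <= U)%MS, ~~ (val P <= V)%MS & (val P' <= V + val P)%MS]]|
  = q ^ \rank V.
Proof.
move=> VU P'U P'V; have VU' : (V + val P' <= U)%MS by rewrite addsmx_sub VU.
rewrite -[RHS](addKn (vq q (\rank V))) -vqS // -(mxrank_adds_point P'V).
rewrite -card_points_diff ?addsmxSl //; apply: eq_card => P; rewrite !inE.
have [PV|PV] := boolP (val P <= V)%MS; first by rewrite !andbF.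
rewrite !andbT; apply/andP/idP => [[_]|PVP']; first exact: adds_point_exchange.
by rewrite (submx_trans PVP' VU') (adds_point_exchange P'V PV).
Qed.

Lemma sum_mult_diff_extensions (M : point -> nat) (U V : 'M[F]_k) : (V <= U)%MS ->
  \sum_(P : point | (val P <= U)%MS && ~~ (val P <= V)%MS) mult_diff M (V + val P)%MS V
  = q ^ \rank V * mult_diff M U V.
Proof.
move=> VU; rewrite /mult_diff (exchange_big_dep (fun P' : point =>
  (val P' <= U)%MS && ~~ (val P' <= V)%MS)) /=; last first.
  move=> P P' /andP[PU _] /andP[P'VP ->]; rewrite andbT.
  by apply: submx_trans P'VP _; rewrite addsmx_sub VU.
rewrite big_distrr /=; apply: eq_bigr => P' /andP[P'U P'V].
rewrite sum_nat_cond_const -(card_points_exchange VU P'U P'V).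
by congr (_ * _); apply: eq_card => P; rewrite !inE P'V andbT andbA.
Qed.

(* Averaging over the spaces V + P, P a point of U outside V: they cover the
   points of U outside V, each exactly q ^ \rank V times. *)
Lemma residual_bound (M : point -> nat) (U V : 'M[F]_k) t w :
  0 < t -> (V <= U)%MS -> \rank U = (\rank V + t).+1 ->
  (forall T, (V <= T)%MS -> (T <= U)%MS -> \rank T = (\rank V).+1 -> mult M T <= w) ->
  mult M V + ceil_div (mult M U - w) (q * vq q t) <= w.
Proof.
move=> t_gt0 VU rU Hw.
pose A := [pred P : point | (val P <= U)%MS && ~~ (val P <= V)%MS].
have cardA : #|[set P | A P]| = q ^ \rank V * vq q t.+1.
  by rewrite card_points_diff // rU -addnS vqD // addKn.
have line_bound P : A P -> mult M (V + val P)%MS <= w.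
  by case/andP=> PU PV; apply: Hw; rewrite ?addsmxSl ?addsmx_sub ?VU ?mxrank_adds_point.
have qa_gt0 : 0 < q ^ \rank V by rewrite expn_gt0 q_gt0.
have /card_gt0P[P] : 0 < #|[set P | A P]| by rewrite cardA muln_gt0 qa_gt0 vq_gt0.
rewrite inE => AP.
have multV_le : mult M V <= w.
  by apply: leq_trans (line_bound P AP); apply: leq_mult_sub; exact: addsmxSl.
have diff_le : mult_diff M U V <= vq q t.+1 * (w - mult M V).
  rewrite -(leq_pmul2l qa_gt0) mulnA -cardA -sum_nat_cond_const.
  rewrite -sum_mult_diff_extensions //; apply: leq_sum => P' AP'.
  have := line_bound P' AP'; rewrite (mult_split M (addsmxSl V (val P'))).
  by rewrite leq_subRL.
move: diff_le; rewrite (vqSl q_gt1); set c := q * vq q t.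
have c_gt0 : 0 < c by rewrite muln_gt0 q_gt0 vq_gt0.
rewrite -leq_subRL // ceil_div_leq // (mult_split M VU) mulSn [_ * c]mulnC; nia.
Qed.

Lemma exists_max_mult (M : point -> nat) (U : 'M[F]_k) s : s <= \rank U ->
  exists T : 'M[F]_k, [/\ (T <= U)%MS, \rank T = s &
    forall T', (T' <= U)%MS -> \rank T' = s -> mult M T' <= mult M T].
Proof.
move=> le_sU; have [T0 T0U rT0] := exists_submx_rank le_sU.
pose P := [pred T : 'M[F]_k | (T <= U)%MS && (\rank T == s)].
have P_T0 : P T0 by rewrite /= T0U rT0 eqxx.
case: (arg_maxnP (mult M) P_T0) => T /andP[TU /eqP rT] maxT.
by exists T; split => // T' T'U rT'; apply: maxT; rewrite /= T'U rT' eqxx.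
Qed.

Theorem arc_griesmer_bound (M : point -> nat) s t (U : 'M[F]_k) w :
  0 < t <= s -> \rank U = s ->
  (forall T, (T <= U)%MS -> \rank T = s - t -> mult M T <= w) ->
  griesmer_r q t s (mult M U - w) <= mult M U.
Proof.
elim/ltn_ind: s t U w => s IH t U w /andP[t_gt0]; rewrite leq_eqVlt => /orP[/eqP<-|lt_ts] rU Hw.
  by rewrite /griesmer_r subnn big_geq // addn0 leq_subr.
have [T1 [T1U rT1 maxT1]] := exists_max_mult M (leq_trans (leq_subr t s) (eq_leq (esym rU))).
set W := mult M T1; have W_le_w : W <= w by apply: Hw.
set c := q * vq q t; have c_gt0 : 0 < c by rewrite muln_gt0 q_gt0 vq_gt0.
set E := ceil_div (mult M U - W) c.
have residual V : (V <= T1)%MS -> \rank V = s - t - 1 -> mult M V + E <= W.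
  move=> VT1 rV; apply: residual_bound (submx_trans VT1 T1U) _ _ => //.
    by rewrite rU rV; lia.
  by move=> T _ TU rT; apply: maxT1 => //; rewrite rT rV; lia.
have le_rT1 : s - t - 1 <= \rank T1 by rewrite rT1 leq_subr.
have [V0 V0T1 rV0] := exists_submx_rank le_rT1.
have E_le_W : E <= W by apply: leq_trans (residual V0 V0T1 rV0); apply: leq_addl.
have gW : griesmer_r q 1 (s - t) E <= W.
  have lt_st : s - t < s by lia.
  have le_1st : 0 < 1 <= s - t by rewrite subn_gt0 lt_ts.
  have := IH (s - t) lt_st 1 T1 (W - E) le_1st rT1; rewrite subKn //; apply.
  by move=> V VT1 rV; rewrite leq_subRL // addnC residual.
apply: leq_trans (leq_griesmer_r _ _ _ (leq_sub2l _ W_le_w)) _.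
rewrite griesmer_r_step // -/c -/E; have := leq_mult_sub M T1U; lia.
Qed.

End Points.

Section Codes.
Variables (F : finFieldType) (k : nat).
Local Notation point := (point F k).
Local Open Scope ring_scope.

Lemma support_col N (D : 'M[F]_N) j : (j \in Defs.support D) = (col j D != 0).
Proof.
rewrite inE; apply/existsP/idP => [[v /andP[/submxP[u ->] uDj]]|Dj].
  apply: contraNneq uDj => Dj0; rewrite mxE big1 // => i _.
  by move/colP: Dj0 => /(_ i); rewrite !mxE => ->; rewrite mulr0.
have [i Dij] : exists i, D i j != 0%R.
  apply/existsP; apply: contraR Dj; rewrite negb_exists => /forallP D0.
  by apply/eqP/matrixP => i l; rewrite !mxE; apply/eqP/negPn.
by exists (row i D); rewrite row_sub mxE.
Qed.

Lemma card_support N (D : 'M[F]_N) :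
  #|Defs.support D| = (N - #|[set j : 'I_N | col j D == 0%R]|)%N.
Proof.
have := cardsC (Defs.support D); rewrite card_ord.
have -> : #|~: Defs.support D| = #|[set j : 'I_N | col j D == 0]|.
  by apply: eq_card => j; rewrite in_setC support_col negbK inE.
lia.
Qed.

Lemma col_submx_eq0 m n N (A : 'M[F]_(m, N)) (B : 'M[F]_(n, N)) j :
  (A <= B)%MS -> col j B = 0 -> col j A = 0.
Proof. by case/submxP=> X ->; rewrite !colE -mulmxA -colE => ->; rewrite mulmx0. Qed.

Lemma card_cols_sub (K : point -> nat) N (G : 'M[F]_(k, N)) (T : 'M[F]_k) :
  assoc_gen_matrix K G -> #|[set j : 'I_N | ((col j G)^T <= T)%MS]| = mult K T.
Proof.
case=> G_neq0 G_count; rewrite /mult.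
under [RHS]eq_bigr => P _ do rewrite -G_count.
rewrite card_set_sum (big_mkcond (fun P : point => (val P <= T)%MS)) /=.
transitivity (\sum_(P : point) \sum_(j : 'I_N)
    ((val P <= T)%MS && ((col j G)^T <= val P)%MS))%N.
  rewrite exchange_big /=; apply: eq_bigr => j _.
  by rewrite sum_points_through // trmx_eq0 G_neq0.
apply: eq_bigr => P _; case: (val P <= T)%MS; last by rewrite big1.
by rewrite card_set_sum; apply: eq_bigr => j _; rewrite point_eq_sub // trmx_eq0 G_neq0.
Qed.

Lemma assoc_gen_matrix_size (K : point -> nat) N (G : 'M[F]_(k, N)) :
  assoc_gen_matrix K G -> N = Defs.total K.
Proof.
move=> KG; rewrite total_mult -(card_cols_sub _ KG) -[LHS]card_ord.
by apply: eq_card => j; rewrite !inE submx1.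
Qed.

Lemma ghw_le N (G : 'M[F]_(k, N)) r : (ghw G r <= N)%N.
Proof. by rewrite /ghw -minEnat; exact: (@bigmin_le_id _ nat). Qed.

Lemma ghw_eq N (G : 'M[F]_(k, N)) r x :
  (forall D : 'M[F]_N, (D <= G)%MS -> \rank D = r -> (x <= #|Defs.support D|)%N) ->
  (exists2 D : 'M[F]_N, (D <= G)%MS && (\rank D == r) & #|Defs.support D| = x) ->
  ghw G r = x.
Proof.
move=> lower [D0 D0P D0x]; subst x; apply/eqP; rewrite eqn_leq /ghw -minEnat.
apply/andP; split; first exact: (@bigmin_le_cond _ nat).
apply/(@bigmin_geP _ nat); split => [|D /andP[DG /eqP rD]]; last exact: lower.
by rewrite -[N in (_ <= N)%O]card_ord; exact: max_card.
Qed.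

Lemma ghw_lower_bound (K : point -> nat) N (G : 'M[F]_(k, N)) r w (D : 'M[F]_N) :
  assoc_gen_matrix K G ->
  (forall T : 'M[F]_k, \rank T = (k - r)%N -> (mult K T <= w)%N) ->
  (D <= G)%MS -> \rank D = r -> (N - w <= #|Defs.support D|)%N.
Proof.
move=> KG arc /submxP[M defD] rD.
have rM : (r <= \rank M)%N by rewrite -rD defD mxrankM_maxl.
have [T0 T0M rT0] := exists_submx_rank rM.
have rZ : \rank (kermx T0^T) = (k - r)%N by rewrite mxrank_ker mxrank_tr rT0.
rewrite card_support leq_sub2l // (leq_trans _ (arc _ rZ)) // -(card_cols_sub _ KG).
apply: subset_leq_card; apply/subsetP => j; rewrite !inE => /eqP Dj0.
rewrite sub_kermx -trmx_mul trmx_eq0; case/submxP: T0M => X ->.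
by rewrite !colE -!mulmxA (mulmxA M) -colE -defD Dj0 mulmx0.
Qed.

Lemma ghw_upper_bound (K : point -> nat) N (G : 'M[F]_(k, N)) r (T : 'M[F]_k) :
  assoc_gen_matrix K G -> row_free G -> (r <= k)%N -> \rank T = (k - r)%N ->
  exists2 D : 'M[F]_N, (D <= G)%MS && (\rank D == r) & #|Defs.support D| = (N - mult K T)%N.
Proof.
move=> KG G_free le_rk rT; set Y := (cokermx T)^T.
exists <<Y *m G>>%MS.
  by rewrite genmxE submxMl mxrank_gen mxrankMfree // /Y mxrank_tr mxrank_coker rT subKn // eqxx.
rewrite card_support -(card_cols_sub _ KG); congr (_ - _)%N; apply: eq_card => j.
rewrite !inE submxE -[in RHS]trmx_eq0 trmx_mul trmxK [in RHS]colE mulmxA -colE.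
by apply/eqP/eqP => Yj0; apply: col_submx_eq0 Yj0; rewrite genmxE.
Qed.

Lemma cols_in_hyperplane N (G : 'M[F]_(k, N)) : ~~ row_free G ->
  exists2 H : 'M[F]_k, \rank H = k.-1 & forall j, ((col j G)^T <= H)%MS.
Proof.
move=> G_nfree; have rG : (\rank G < k)%N by rewrite ltn_neqAle rank_leq_row andbT.
have [v vker rv] : exists2 v : 'M[F]_k, (v <= kermx G)%MS & \rank v = 1%N.
  by apply: exists_submx_rank; rewrite mxrank_ker subn_gt0.
exists (kermx v^T); first by rewrite mxrank_ker mxrank_tr rv subn1.
move=> j; rewrite sub_kermx -trmx_mul trmx_eq0.
by move: vker; rewrite sub_kermx => /eqP vG0; rewrite colE mulmxA vG0 mul0mx.
Qed.

Lemma assoc_gen_matrix_row_free (K : point -> nat) N (G : 'M[F]_(k, N)) :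
  assoc_gen_matrix K G ->
  (forall H : 'M[F]_k, \rank H = k.-1 -> (mult K H < Defs.total K)%N) -> row_free G.
Proof.
move=> KG Hlt; apply/negPn/negP => /cols_in_hyperplane[H rH GH].
have := Hlt H rH; rewrite -(card_cols_sub _ KG) -(assoc_gen_matrix_size KG).
by rewrite (eq_card (B := 'I_N)) ?card_ord ?ltnn // => j; rewrite !inE GH.
Qed.

Lemma ghw_arc (K : point -> nat) N (G : 'M[F]_(k, N)) r w :
  assoc_gen_matrix K G -> row_free G -> (r <= k)%N ->
  (forall T : 'M[F]_k, \rank T = (k - r)%N -> (mult K T <= w)%N) ->
  (exists2 T : 'M[F]_k, \rank T = (k - r)%N & mult K T = w) ->
  ghw G r = (N - w)%N.
Proof.
move=> KG G_free le_rk arc [T rT Tw]; subst w; apply: ghw_eq.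
  by move=> D; apply: ghw_lower_bound KG arc.
exact: ghw_upper_bound.
Qed.

End Codes.

Lemma mult_complement (F : finFieldType) k (FF : point F k -> nat) sigma (S : 'M[F]_k) :
  (forall P, FF P <= sigma) ->
  mult (fun P => sigma - FF P) S = sigma * vq #|F| (\rank S) - mult FF S.
Proof.
move=> FF_le; rewrite /mult sumnB => [|P _]; last exact: FF_le.
by rewrite sum_nat_cond_const card_points_sub mulnC.
Qed.

Section ComplementOfMinihyper.
Variables (F : finFieldType) (k r : nat) (eps : nat -> nat) (FF : point F k -> nat) (sigma : nat).
Local Notation q := #|F|.
Local Notation m := (k - r).
Hypotheses (r_gt0 : 0 < r) (r_lt_k : r < k).
Hypothesis eps_digit : forall i, r <= i -> i <= k - 2 -> eps i <= q - 1.
Hypothesis FF_minihyper :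
  minihyper_params FF (\sum_(r <= i < k - 1) eps i * vq q i.+1)
                      (\sum_(r <= i < k - 1) eps i * vq q (i.+1 - r)) (k - 1 - r).
Hypothesis FF_le : forall P, FF P <= sigma.

Let q_gt1 : 1 < q := card_finNzRing_gt1 F.
Let K P := sigma - FF P.
(* q-adic digits e_0 = 0, e_(j+1) = eps_(j+r), reindexing the sums over r <= i <= k - 2. *)
Let e i := if i is j.+1 then eps (j + r) else 0.

Let e_digit i : i < m -> e i < q.
Proof.
case: i => [|i] lt_im /=; first exact: ltnW.
have le_ik : i + r <= k - 2 by lia.
by rewrite (leq_ltn_trans (eps_digit (leq_addl i r) le_ik)) // subn1 ltn_predL (ltnW q_gt1).
Qed.

Lemma sum_eps_shift (g : nat -> nat) :
  \sum_(r <= i < k - 1) eps i * g i.+1 = \sum_(i < m) e i * g (i + r).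
Proof.
rewrite -(big_mkord xpredT (fun i => e i * g (i + r))).
have -> : m = (k - 1 - r).+1 by lia.
rewrite big_nat_recl // mul0n add0n -{1}(add0n r) big_addn.
by apply: eq_bigr => i _; rewrite addSn.
Qed.

Let mult_K S : mult K S = sigma * vq q (\rank S) - mult FF S.
Proof. exact: mult_complement. Qed.

Let rank_proj (S : 'M[F]_k) : proj_subspace (k - 1 - r) S = (\rank S == m).
Proof. by rewrite /proj_subspace; congr (_ == _); lia. Qed.

Lemma complement_total : Defs.total K = arc_n q r m sigma e.
Proof.
have [FF_total _ _] := FF_minihyper.
rewrite total_mult mult_K mxrank1 -total_mult FF_total sum_eps_shift.
by rewrite /arc_n subnK // ltnW.
Qed.

Let sum_eps_minihyper :
  \sum_(r <= i < k - 1) eps i * vq q (i.+1 - r) = \sum_(i < m) e i * vq q i.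
Proof. by rewrite (sum_eps_shift (fun j => vq q (j - r))); under eq_bigr do rewrite addnK. Qed.

Lemma complement_arc_bound T : \rank T = m -> mult K T <= arc_w q m sigma e.
Proof.
have [_ FF_min _] := FF_minihyper; move=> rT.
by rewrite mult_K rT leq_sub2l // -sum_eps_minihyper FF_min // rank_proj rT.
Qed.

Lemma complement_arc_attained : exists2 T, \rank T = m & mult K T = arc_w q m sigma e.
Proof.
have [_ _ [T rT FF_T]] := FF_minihyper; rewrite rank_proj in rT.
by exists T; rewrite ?mult_K (eqP rT) // FF_T sum_eps_minihyper.
Qed.

Lemma complement_hyperplane_lt H :
  0 < sigma -> \rank H = k.-1 -> mult K H < Defs.total K.
Proof.
move=> sigma_gt0 rH; have w_lt_n := arc_w_lt_n q_gt1 r_gt0 sigma_gt0 e_digit.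
rewrite complement_total; have [le_r1|lt_1r] := leqP r 1.
  by apply: leq_ltn_trans w_lt_n; apply: complement_arc_bound; rewrite rH; lia.
have le_Hn : mult K H <= arc_n q r m sigma e.
  by rewrite -complement_total total_mult leq_mult_sub ?submx1.
rewrite ltn_neqAle le_Hn andbT; apply/eqP => eq_Hn.
have t_range : 0 < r.-1 <= k.-1 by apply/andP; split; lia.
have arcH T : (T <= H)%MS -> \rank T = k.-1 - r.-1 -> mult K T <= arc_w q m sigma e.
  by move=> _ rT; apply: complement_arc_bound; rewrite rT; lia.
have := arc_griesmer_bound t_range rH arcH; rewrite eq_Hn.
have m_gt0 : 0 < m by rewrite subn_gt0.
have := griesmer_arc_n_gt q_gt1 r_gt0 sigma_gt0 e_digit lt_1r m_gt0.
rewrite subnK ?(ltnW r_lt_k) // => gt_n le_n.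
by have := leq_trans gt_n le_n; rewrite ltnn.
Qed.

Lemma complement_arc_params :
  arc_params K (sigma * vq q k - \sum_(r <= i < k - 1) eps i * vq q i.+1)
               (sigma * vq q m - \sum_(r <= i < k - 1) eps i * vq q (i.+1 - r))
               (k - 1 - r).
Proof.
rewrite sum_eps_minihyper sum_eps_shift; split.
- by rewrite complement_total /arc_n subnK // ltnW.
- by move=> S; rewrite rank_proj => /eqP; apply: complement_arc_bound.
- by have [T rT KT] := complement_arc_attained; exists T; rewrite ?rank_proj ?rT.
Qed.

Lemma complement_code_griesmer N (G : 'M[F]_(k, N)) :
  assoc_gen_matrix K G -> N = griesmer_r q r k (ghw G r).
Proof.
move=> KG; have N_total := assoc_gen_matrix_size KG.
have [sigma0|sigma_gt0] := posnP sigma.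
  have N0 : N = 0 by rewrite N_total; apply: big1 => P _; rewrite /K sigma0.
  have ghw0 : ghw G r = 0 by have := ghw_le G r; lia.
  by rewrite ghw0 griesmer_r0.
have G_free : row_free G.
  by apply: (assoc_gen_matrix_row_free KG) => H; apply: complement_hyperplane_lt.
rewrite (ghw_arc KG G_free (ltnW r_lt_k) complement_arc_bound complement_arc_attained).
rewrite N_total complement_total.
have := griesmer_arc_n q_gt1 r_gt0 sigma_gt0 e_digit.
by rewrite subnK ?(ltnW r_lt_k) // => ->.
Qed.

End ComplementOfMinihyper.

Unset Implicit Arguments.

Theorem mainTheorem1 (F : finFieldType) (q k r : nat) (eps : nat -> nat)
    (FF : point F k -> nat) (sigma : nat) :
  #|F| = q ->
  (2 <= k)%N -> (1 <= r)%N -> (r <= k - 1)%N ->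
  (forall i, (r <= i)%N -> (i <= k - 2)%N -> (eps i <= q - 1)%N) ->
  minihyper_params FF (\sum_(r <= i < k - 1) eps i * vq q i.+1)%N
                      (\sum_(r <= i < k - 1) eps i * vq q (i.+1 - r))%N
                      (k - 1 - r) ->
  (\max_(P : point F k) FF P <= sigma)%N ->
  let K := fun P : point F k => (sigma - FF P)%N in
  arc_params K (sigma * vq q k - \sum_(r <= i < k - 1) eps i * vq q i.+1)%N
               (sigma * vq q (k - r) - \sum_(r <= i < k - 1) eps i * vq q (i.+1 - r))%N
               (k - 1 - r)
  /\ (forall (N : nat) (G : 'M[F]_(k, N)),
        assoc_gen_matrix K G -> N = griesmer_r q r k (ghw G r)).
Proof.
move=> <- _ r_gt0 le_r_k1 eps_digit FF_minihyper FF_max K.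
have r_lt_k : r < k by lia.
have FF_le P : FF P <= sigma by apply: leq_trans FF_max; apply: leq_bigmax.
split; first exact: complement_arc_params.
move=> N G KG.
exact: (complement_code_griesmer r_gt0 r_lt_k eps_digit FF_minihyper FF_le KG).
Qed.
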